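(* Let $y>0$ and $\mathscr{A}_n(y)=\dfrac{1}{y^2+\pi^2n^2}$, $n\in\mathbb{Z}$. Then the discrete Hilbert transform of $(\mathscr{A}_n(y))_{n\in\mathbb{Z}}$, i.e. the sequence $\frac{1}{\pi}\sum_{m\in\mathbb{Z}\setminus\{0\}}\frac{\mathscr{A}_{n-m}(y)}{m}$, is given by \[ \mathscr{B}_n(y)=\frac{\pi n\coth y}{y(y^2+\pi^2n^2)}-\frac{2\pi n}{(y^2+\pi^2n^2)^2},\qquad n\in\mathbb{Z}. \] *)

From Stdlib Require Import Reals ZArith.
From Coquelicot Require Import Coquelicot.
Open Scope R_scope.

Definition calA (y : R) (n : Z) : R := / (y ^ 2 + PI ^ 2 * (IZR n) ^ 2).

Definition coth (y : R) : R := cosh y / sinh y.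
Definition calB (y : R) (n : Z) : R :=
  PI * IZR n * coth y / (y * (y ^ 2 + PI ^ 2 * (IZR n) ^ 2))
  - 2 * PI * IZR n / (y ^ 2 + PI ^ 2 * (IZR n) ^ 2) ^ 2.

Definition is_sum_Zstar (f : Z -> R) (s : R) : Prop :=
  ex_series (fun k : nat => Rabs (f (Z.of_nat (S k)))) /\
  ex_series (fun k : nat => Rabs (f (- Z.of_nat (S k))%Z)) /\
  s = Series (fun k : nat => f (Z.of_nat (S k)))
      + Series (fun k : nat => f (- Z.of_nat (S k))%Z).

Definition is_discrete_hilbert (a : Z -> R) (n : Z) (h : R) : Prop :=
  exists s, is_sum_Zstar (fun m => a (n - m)%Z / IZR m) s /\ h = s / PI.

From Stdlib Require Import Reals ZArith Lra Lia.
From Coquelicot Require Import Coquelicot.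
Open Scope R_scope.

(* For m <> 0, partial fractions give
     A_{n-m} / m = A_n / m + pi^2 A_n h(-m),   h(x) = (n + (n + x)) A_{n+x},
   and the terms A_n / m cancel between m and -m, so the transform equals
   pi A_n (sum_{m in Z} h(m) - h(0)).  Both A_x and x A_x decay like 1/|x|, so
   shifting a symmetric sum over [-M, M] by n only changes it by boundary terms
   that tend to 0.  Hence sum_m h(m) = n sum_m A_m + sum_m m A_m = n coth y / y, by
   oddness and by the Mittag-Leffler expansion coth y = y sum_{m in Z} A_m.
   The latter is the limit M -> oo of the exact identity, with N = 2M + 1,
     coth y = sum_{|m| <= M} N sinh(2y/N) / (2 (N^2 sinh^2(y/N) + N^2 sin^2(pi m/N))),
   a discrete Poisson-kernel sum over the N-th roots of unity; Tannery's theorem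
   justifies the passage to the limit, the summands being O(1/m^2) uniformly in M. *)

(** * Finite and symmetric sums *)

(* Unlike Coquelicot's [sum_n f n], which has [n + 1] terms, [fsum f n] has [n]
   terms, so that empty sums exist. *)
Fixpoint fsum (f : nat -> R) (n : nat) : R :=
  match n with O => 0 | S n' => fsum f n' + f n' end.

Lemma fsum_ext f g n : (forall i, (i < n)%nat -> f i = g i) -> fsum f n = fsum g n.
Proof.
  induction n as [|n IH]; simpl; intros Hfg; [reflexivity|].
  rewrite IH, Hfg; [reflexivity | lia | intros; apply Hfg; lia].
Qed.

Lemma fsum_eq0 f n : (forall i, (i < n)%nat -> f i = 0) -> fsum f n = 0.
Proof.
  induction n as [|n IH]; simpl; intros Hf; [reflexivity|].
  rewrite IH, Hf; [ring | lia | intros; apply Hf; lia].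
Qed.

Lemma fsum_plus f g n : fsum (fun i => f i + g i) n = fsum f n + fsum g n.
Proof. induction n; simpl; [ring | rewrite IHn; ring]. Qed.

Lemma fsum_scal c f n : fsum (fun i => c * f i) n = c * fsum f n.
Proof. induction n; simpl; [ring | rewrite IHn; ring]. Qed.

Lemma fsum_const c n : fsum (fun _ => c) n = INR n * c.
Proof. induction n; simpl fsum; [simpl; ring | rewrite IHn, S_INR; ring]. Qed.

Lemma fsum_split f a b : fsum f (a + b) = fsum f a + fsum (fun i => f (a + i)%nat) b.
Proof.
  induction b as [|b IH]; simpl; [rewrite Nat.add_0_r; ring|].
  rewrite Nat.add_succ_r; simpl; rewrite IH; ring.
Qed.

Lemma fsum_telescope h n : fsum (fun i => h (S i) - h i) n = h n - h O.
Proof. induction n; simpl; [ring | rewrite IHn; ring]. Qed.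

Lemma fsum_le f g n : (forall i, (i < n)%nat -> f i <= g i) -> fsum f n <= fsum g n.
Proof.
  induction n as [|n IH]; simpl; intros Hfg; [lra|].
  assert (fsum f n <= fsum g n) by (apply IH; intros; apply Hfg; lia).
  specialize (Hfg n ltac:(lia)); lra.
Qed.

Lemma fsum_abs f n : Rabs (fsum f n) <= fsum (fun i => Rabs (f i)) n.
Proof.
  induction n; simpl; [rewrite Rabs_R0; lra|].
  eapply Rle_trans; [apply Rabs_triang | lra].
Qed.

Lemma is_lim_seq_fsum (u : nat -> nat -> R) (v : nat -> R) n :
  (forall i, is_lim_seq (fun M => u M i) (v i)) ->
  is_lim_seq (fun M => fsum (u M) n) (fsum v n).
Proof.
  intros Huv; induction n; simpl; [apply is_lim_seq_const | apply is_lim_seq_plus'; auto].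
Qed.

Lemma is_series_fsum a l : is_series a l <-> is_lim_seq (fsum a) l.
Proof.
  assert (Hsum : forall n, sum_n a n = fsum a (S n)).
  { induction n; [rewrite sum_O; simpl; rewrite Rplus_0_l; reflexivity|].
    rewrite sum_Sn, IHn; reflexivity. }
  change (is_lim_seq (sum_n a) l <-> is_lim_seq (fsum a) l).
  rewrite (is_lim_seq_incr_1 (fsum a) l).
  split; apply is_lim_seq_ext; intros n; [|symmetry]; apply Hsum.
Qed.

Definition sum_sym (M : nat) (g : R -> R) : R :=
  g 0 + fsum (fun k => g (INR (S k)) + g (- INR (S k))) M.

Definition nterms (M : nat) : R := INR (2 * M + 1).

Lemma nterms_eq M : nterms M = 2 * INR M + 1.
Proof. unfold nterms; rewrite plus_INR, mult_INR; simpl; ring. Qed.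

Lemma nterms_ge1 M : 1 <= nterms M.
Proof. rewrite nterms_eq; pose proof (pos_INR M); lra. Qed.

Lemma sum_sym_ext_nat M f g :
  (forall k, f (INR k) = g (INR k) /\ f (- INR k) = g (- INR k)) ->
  sum_sym M f = sum_sym M g.
Proof.
  intros Hfg; unfold sum_sym.
  replace 0 with (INR 0) by reflexivity; rewrite (proj1 (Hfg O)).
  f_equal; apply fsum_ext; intros i _.
  destruct (Hfg (S i)) as [-> ->]; reflexivity.
Qed.

Lemma sum_sym_ext M f g : (forall x, f x = g x) -> sum_sym M f = sum_sym M g.
Proof. intros Hfg; apply sum_sym_ext_nat; auto. Qed.

Lemma sum_sym_plus M f g : sum_sym M (fun x => f x + g x) = sum_sym M f + sum_sym M g.
Proof.
  unfold sum_sym.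
  rewrite (fsum_ext _ (fun k => (f (INR (S k)) + f (- INR (S k)))
                              + (g (INR (S k)) + g (- INR (S k))))) by (intros; ring).
  rewrite fsum_plus; ring.
Qed.

Lemma sum_sym_scal M c g : sum_sym M (fun x => c * g x) = c * sum_sym M g.
Proof.
  unfold sum_sym; rewrite Rmult_plus_distr_l, <- fsum_scal.
  f_equal; apply fsum_ext; intros; ring.
Qed.

Lemma sum_sym_const M c : sum_sym M (fun _ => c) = nterms M * c.
Proof.
  unfold sum_sym; rewrite (fsum_ext _ (fun _ => 2 * c)) by (intros; ring).
  rewrite fsum_const, nterms_eq; ring.
Qed.

Lemma sum_sym_fsum M (F : nat -> R -> R) n :
  sum_sym M (fun x => fsum (fun j => F j x) n) = fsum (fun j => sum_sym M (F j)) n.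
Proof.
  induction n as [|n IH]; simpl.
  - unfold sum_sym; simpl; rewrite fsum_eq0 by (intros; ring); ring.
  - rewrite sum_sym_plus, IH; reflexivity.
Qed.

Lemma sum_sym_even M g :
  (forall x, g (- x) = g x) ->
  sum_sym M g = g 0 + fsum (fun k => 2 * g (INR (S k))) M.
Proof. intros Hg; unfold sum_sym; f_equal; apply fsum_ext; intros; rewrite Hg; ring. Qed.

Lemma sum_sym_odd M g : (forall x, g (- x) = - g x) -> sum_sym M g = 0.
Proof.
  intros Hg; unfold sum_sym.
  assert (g 0 = 0) as -> by (pose proof (Hg 0) as H0; rewrite Ropp_0 in H0; lra).
  rewrite fsum_eq0 by (intros; rewrite Hg; ring); ring.
Qed.

Lemma sum_sym_reflect M g : sum_sym M (fun x => g (- x)) = sum_sym M g.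
Proof.
  unfold sum_sym; rewrite Ropp_0; f_equal; apply fsum_ext; intros.
  rewrite Ropp_involutive; ring.
Qed.

(** * A finite partial-fraction identity for coth *)

Lemma geometric_cos_sum r phi L :
  (1 - 2 * r * cos phi + r ^ 2) * fsum (fun j => r ^ j * cos (INR j * phi)) (S L)
  = 1 - r * cos phi - r ^ S L * cos (INR (S L) * phi) + r ^ S (S L) * cos (INR L * phi).
Proof.
  induction L as [|L IH].
  - simpl; replace (1 * phi) with phi by ring; rewrite Rmult_0_l, cos_0; ring.
  - change (fsum ?f (S (S L))) with (fsum f (S L) + f (S L)).
    rewrite Rmult_plus_distr_l, IH.
    assert (Hrec : cos (INR (S (S L)) * phi)
                   = 2 * cos phi * cos (INR (S L) * phi) - cos (INR L * phi)).
    { rewrite !S_INR.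
      replace ((INR L + 1 + 1) * phi) with ((INR L + 1) * phi + phi) by ring.
      replace (INR L * phi) with ((INR L + 1) * phi - phi) by ring.
      rewrite cos_plus, cos_minus; ring. }
    rewrite Hrec; simpl pow; ring.
Qed.

Lemma geometric_cos_sum_period r phi N :
  (1 <= N)%nat -> cos (INR N * phi) = 1 -> sin (INR N * phi) = 0 ->
  (1 - 2 * r * cos phi + r ^ 2) * fsum (fun j => r ^ j * cos (INR j * phi)) N
  = (1 - r * cos phi) * (1 - r ^ N).
Proof.
  intros HN Hcos Hsin; destruct N as [|L]; [lia|].
  rewrite geometric_cos_sum, Hcos.
  replace (INR L * phi) with (INR (S L) * phi - phi) by (rewrite S_INR; ring).
  rewrite cos_minus, Hcos, Hsin; simpl pow; ring.
Qed.

Lemma dirichlet_kernel alpha M :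
  2 * sin (alpha / 2) * (1 + 2 * fsum (fun k => cos (INR (S k) * alpha)) M)
  = 2 * sin ((INR M + / 2) * alpha).
Proof.
  induction M as [|M IH].
  - simpl; replace ((0 + / 2) * alpha) with (alpha / 2) by field; ring.
  - change (fsum ?f (S M)) with (fsum f M + f M); cbv beta.
    replace (2 * sin (alpha / 2) * (1 + 2 * (fsum (fun k => cos (INR (S k) * alpha)) M
                                             + cos (INR (S M) * alpha))))
      with (2 * sin (alpha / 2) * (1 + 2 * fsum (fun k => cos (INR (S k) * alpha)) M)
            + 4 * sin (alpha / 2) * cos (INR (S M) * alpha)) by ring.
    rewrite IH, S_INR.
    replace ((INR M + 1 + / 2) * alpha) with ((INR M + 1) * alpha + alpha / 2) by field.
    replace ((INR M + / 2) * alpha) with ((INR M + 1) * alpha - alpha / 2) by field.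
    rewrite sin_plus, sin_minus; ring.
Qed.

(* Orthogonality of the characters of Z/(2M+1)Z, via the Dirichlet kernel. *)
Lemma sum_sym_cos_eq0 M j : (1 <= j <= 2 * M)%nat ->
  sum_sym M (fun x => cos (INR j * (2 * PI * x / nterms M))) = 0.
Proof.
  intros Hj.
  pose proof (nterms_ge1 M) as HN; pose proof PI_RGT_0 as HPI.
  set (N := nterms M) in *.
  set (alpha := 2 * PI * INR j / N).
  assert (Hj0 : 0 < INR j) by (apply lt_0_INR; lia).
  assert (HjN : INR j < N) by (unfold N, nterms; apply lt_INR; lia).
  rewrite sum_sym_even.
  2: { intros x; rewrite <- cos_neg; f_equal; field; lra. }
  replace (INR j * (2 * PI * 0 / N)) with 0 by (field; lra).
  rewrite cos_0.
  rewrite (fsum_ext _ (fun k => 2 * cos (INR (S k) * alpha)))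
    by (intros; unfold alpha; do 2 f_equal; field; lra).
  rewrite fsum_scal.
  assert (Hsin : 0 < sin (alpha / 2)).
  { apply sin_gt_0; unfold alpha.
    - apply Rmult_lt_0_compat; [apply Rdiv_lt_0_compat|]; nra.
    - apply Rmult_lt_reg_r with (2 * N); [lra|].
      replace (2 * PI * INR j / N / 2 * (2 * N)) with (2 * PI * INR j) by (field; lra).
      nra. }
  pose proof (dirichlet_kernel alpha M) as Hdir.
  replace ((INR M + / 2) * alpha) with (IZR (Z.of_nat j) * PI) in Hdir
    by (unfold alpha, N; rewrite nterms_eq, <- INR_IZR_INZ; field;
        pose proof (pos_INR M); lra).
  rewrite (sin_eq_0_1 (IZR (Z.of_nat j) * PI)) in Hdir by (exists (Z.of_nat j); reflexivity).
  apply Rmult_eq_reg_l with (2 * sin (alpha / 2)); lra.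
Qed.

(* Discrete Poisson kernel: the sum of [Re (1 / (1 - r w))] over the N-th roots of
   unity [w], N = 2M + 1, expanded as a geometric series in [r w]. *)
Lemma sum_sym_poisson M r : 0 <= r < 1 ->
  sum_sym M (fun x => (1 - r * cos (2 * PI * x / nterms M))
                      / (1 - 2 * r * cos (2 * PI * x / nterms M) + r ^ 2))
  = nterms M / (1 - r ^ (2 * M + 1)).
Proof.
  intros Hr.
  pose proof (nterms_ge1 M) as HN.
  set (N := nterms M) in *.
  assert (Hden : forall c, -1 <= c <= 1 -> 0 < 1 - 2 * r * c + r ^ 2) by (intros; nra).
  assert (HrN : r ^ (2 * M + 1) < 1) by (apply pow_lt_1_compat; lra || lia).
  set (geom x := fsum (fun j => r ^ j * cos (INR j * (2 * PI * x / N))) (2 * M + 1)).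
  assert (Hgeom : forall x, cos (2 * PI * x) = 1 -> sin (2 * PI * x) = 0 ->
    (1 - r * cos (2 * PI * x / N)) / (1 - 2 * r * cos (2 * PI * x / N) + r ^ 2)
    = / (1 - r ^ (2 * M + 1)) * geom x).
  { intros x Hcos Hsin.
    pose proof (geometric_cos_sum_period r (2 * PI * x / N) (2 * M + 1)) as Hg.
    replace (INR (2 * M + 1) * (2 * PI * x / N)) with (2 * PI * x) in Hg
      by (unfold N, nterms; field; apply not_0_INR; lia).
    specialize (Hg ltac:(lia) Hcos Hsin); fold (geom x) in Hg.
    specialize (Hden _ (COS_bound (2 * PI * x / N))).
    replace (geom x) with ((1 - r * cos (2 * PI * x / N)) * (1 - r ^ (2 * M + 1))
                           / (1 - 2 * r * cos (2 * PI * x / N) + r ^ 2));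
      [field; lra|].
    rewrite <- Hg; field; lra. }
  rewrite (sum_sym_ext_nat M _ (fun x => / (1 - r ^ (2 * M + 1)) * geom x)).
  2: { intros k; split; apply Hgeom;
       try replace (2 * PI * - INR k) with (- (0 + 2 * INR k * PI)) by ring;
       try replace (2 * PI * INR k) with (0 + 2 * INR k * PI) by ring;
       rewrite ?cos_neg, ?sin_neg, ?cos_period, ?sin_period, ?cos_0, ?sin_0; lra. }
  rewrite sum_sym_scal; unfold geom.
  rewrite (sum_sym_fsum M (fun j x => r ^ j * cos (INR j * (2 * PI * x / N)))).
  replace (2 * M + 1)%nat with (1 + 2 * M)%nat by lia.
  rewrite fsum_split, (fsum_eq0 _ (2 * M)).
  - change (fsum ?f 1) with (0 + f O); cbv beta.
    rewrite (sum_sym_ext M _ (fun _ => 1)) by (intros; simpl; rewrite Rmult_0_l, cos_0; ring).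
    rewrite sum_sym_const, (Nat.add_comm 1); fold N; field; lra.
  - intros i Hi; rewrite sum_sym_scal, sum_sym_cos_eq0 by lia; ring.
Qed.

Definition coth_term (y : R) (M : nat) (x : R) : R :=
  nterms M * sinh (2 * y / nterms M)
  / (2 * ((nterms M * sinh (y / nterms M)) ^ 2 + (nterms M * sin (PI * x / nterms M)) ^ 2)).

Lemma coth_term_poisson y M x : 0 < y ->
  let r := exp (-2 * y / nterms M) in
  let c := cos (2 * PI * x / nterms M) in
  coth_term y M x = / nterms M * (2 * ((1 - r * c) / (1 - 2 * r * c + r ^ 2)) - 1).
Proof.
  intros hy r c; unfold coth_term.
  pose proof (nterms_ge1 M) as HN; set (N := nterms M) in *.
  set (u := y / N).
  assert (hu : 0 < u) by (apply Rdiv_lt_0_compat; lra).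
  set (E := exp u).
  assert (hE : 1 < E) by (pose proof (exp_ineq1_le u); unfold E; lra).
  assert (Hr : r = / (E * E)).
  { unfold r; replace (-2 * y / N) with (- (u + u)) by (unfold u; field; lra).
    rewrite exp_Ropp, exp_plus; reflexivity. }
  assert (Hsinh2 : sinh (2 * y / N) = (E * E - / (E * E)) / 2).
  { unfold sinh; replace (2 * y / N) with (u + u) by (unfold u; field; lra).
    rewrite exp_Ropp, exp_plus; reflexivity. }
  assert (Hsinh : sinh u = (E - / E) / 2) by (unfold sinh; rewrite exp_Ropp; reflexivity).
  assert (Hsin : (N * sin (PI * x / N)) ^ 2 = N ^ 2 * (1 - c) / 2).
  { unfold c; replace (2 * PI * x / N) with (2 * (PI * x / N)) by (field; lra).
    rewrite cos_2a_sin; field. }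
  pose proof (COS_bound (2 * PI * x / N)) as Hc; fold c in Hc.
  rewrite Hr, Hsinh2, Hsin; fold u; rewrite Hsinh.
  assert (0 < E * E - 1) by nra.
  assert (0 < E ^ 2) by nra.
  assert (0 < (N * (E * E - 1)) ^ 2) by (apply pow_lt; nra).
  assert (0 <= N ^ 2 * (1 - c) * (E ^ 2 * 2)) by (apply Rmult_le_pos; [apply Rmult_le_pos|]; nra).
  field; repeat split; nra.
Qed.

Lemma exp_pow x n : exp x ^ n = exp (INR n * x).
Proof.
  induction n as [|n IH]; [simpl; rewrite Rmult_0_l, exp_0; reflexivity|].
  rewrite S_INR; simpl pow; rewrite IH, <- exp_plus; f_equal; ring.
Qed.

Lemma coth_eq_sum_sym y M : 0 < y -> coth y = sum_sym M (coth_term y M).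
Proof.
  intros hy.
  pose proof (nterms_ge1 M) as HN.
  rewrite (sum_sym_ext M _ _ (fun x => coth_term_poisson y M x hy)); cbv zeta.
  set (r := exp (-2 * y / nterms M)).
  assert (Hr : 0 <= r < 1).
  { split; [apply Rlt_le, exp_pos|].
    unfold r; rewrite <- exp_0; apply exp_increasing.
    assert (0 < 2 * y / nterms M) by (apply Rdiv_lt_0_compat; lra).
    replace (-2 * y / nterms M) with (- (2 * y / nterms M)) by (field; lra); lra. }
  rewrite sum_sym_scal.
  rewrite (sum_sym_ext M _ (fun x => 2 * ((1 - r * cos (2 * PI * x / nterms M))
             / (1 - 2 * r * cos (2 * PI * x / nterms M) + r ^ 2)) + -1)) by (intros; ring).
  rewrite sum_sym_plus, sum_sym_scal, sum_sym_const, sum_sym_poisson by exact Hr.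
  assert (HrN : r ^ (2 * M + 1) = / (exp y * exp y)).
  { unfold r; rewrite exp_pow; fold (nterms M).
    replace (nterms M * (-2 * y / nterms M)) with (- (y + y)) by (field; lra).
    rewrite exp_Ropp, exp_plus; reflexivity. }
  rewrite HrN; unfold coth, cosh, sinh; rewrite exp_Ropp.
  assert (1 < exp y) by (pose proof (exp_ineq1_le y); lra).
  field; repeat split; nra.
Qed.

(** * The Mittag-Leffler expansion of coth *)

Lemma is_lim_seq_nterms_scaled (f : R -> R) l c :
  derivable_pt_lim f 0 l -> f 0 = 0 ->
  is_lim_seq (fun M => nterms M * f (c / nterms M)) (c * l).
Proof.
  intros Hf Hf0.
  destruct (Req_dec c 0) as [->|Hc].
  - apply (is_lim_seq_ext (fun _ => 0)); [|rewrite Rmult_0_l; apply is_lim_seq_const].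
    intros M; unfold Rdiv; rewrite Rmult_0_l, Hf0; ring.
  - assert (Hq : is_lim_seq (fun M => (f (0 + c / nterms M) - f 0) / (c / nterms M)) l).
    { apply is_lim_seq_Reals; intros eps Heps.
      destruct (Hf eps Heps) as [[d Hd] Hfd]; simpl in Hfd.
      destruct (INR_unbounded (Rabs c / d)) as [M0 HM0].
      exists M0; intros M HM; unfold Rdist.
      pose proof (nterms_ge1 M) as HN.
      assert (INR M0 <= INR M) by (apply le_INR; lia).
      assert (Hcd : Rabs c < d * INR M).
      { apply Rmult_lt_reg_r with (/ d); [apply Rinv_0_lt_compat; lra|].
        replace (d * INR M * / d) with (INR M) by (field; lra); lra. }
      apply Hfd.
      + apply Rmult_integral_contrapositive; split; [exact Hc|].
        apply Rinv_neq_0_compat; lra.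
      + unfold Rdiv; rewrite Rabs_mult, Rabs_inv, (Rabs_right (nterms M)) by lra.
        apply Rmult_lt_reg_r with (nterms M); [lra|].
        rewrite Rmult_assoc, Rinv_l, Rmult_1_r by lra.
        rewrite nterms_eq; pose proof (pos_INR M); nra. }
    apply (is_lim_seq_scal_l _ c) in Hq.
    eapply is_lim_seq_ext; [|exact Hq].
    intros M; pose proof (nterms_ge1 M); rewrite Hf0, Rplus_0_l; field; lra.
Qed.

Definition lorentz (y x : R) : R := / (y ^ 2 + PI ^ 2 * x ^ 2).

Lemma lorentz_denom_pos y x : 0 < y -> 0 < y ^ 2 + PI ^ 2 * x ^ 2.
Proof. intros hy; pose proof PI_RGT_0; nra. Qed.

Lemma lorentz_even y x : lorentz y (- x) = lorentz y x.
Proof. unfold lorentz; f_equal; ring. Qed.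

Lemma coth_term_lim y x : 0 < y -> is_lim_seq (fun M => coth_term y M x) (y * lorentz y x).
Proof.
  intros hy.
  assert (Hsinh : derivable_pt_lim sinh 0 1)
    by (rewrite <- cosh_0; apply derivable_pt_lim_sinh).
  assert (Hsin : derivable_pt_lim sin 0 1)
    by (rewrite <- cos_0; apply derivable_pt_lim_sin).
  pose proof (is_lim_seq_nterms_scaled sinh 1 (2 * y) Hsinh sinh_0) as L1.
  pose proof (is_lim_seq_nterms_scaled sinh 1 y Hsinh sinh_0) as L2.
  pose proof (is_lim_seq_nterms_scaled sin 1 (PI * x) Hsin sin_0) as L3.
  pose proof (lorentz_denom_pos y x hy).
  assert (Hsq : forall u (l : R), is_lim_seq u l -> is_lim_seq (fun M => u M ^ 2) (l ^ 2)).
  { intros u l Hu; replace (l ^ 2) with (l * l) by ring.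
    apply (is_lim_seq_ext (fun M => u M * u M)); [intros; ring|].
    apply is_lim_seq_mult'; exact Hu. }
  replace (y * lorentz y x)
    with (2 * y * 1 / (2 * ((y * 1) ^ 2 + (PI * x * 1) ^ 2))) by (unfold lorentz; field; lra).
  apply is_lim_seq_div'; [exact L1| |nra].
  apply (is_lim_seq_scal_l _ 2 (Finite _)).
  apply is_lim_seq_plus'; apply Hsq; assumption.
Qed.

Lemma sinh_pos v : 0 < v -> 0 < sinh v.
Proof. intros; rewrite <- sinh_0; apply sinh_lt; assumption. Qed.

Lemma scaled_sinh_le N c : 1 <= N -> 0 <= c -> N * sinh (c / N) <= c * exp c.
Proof.
  intros HN Hc.
  set (v := c / N).
  assert (Hv : 0 <= v <= c).
  { unfold v; split; [apply Rdiv_le_0_compat; lra|].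
    apply Rmult_le_reg_r with N; [lra|]; unfold Rdiv; rewrite Rmult_assoc, Rinv_l; nra. }
  assert (Hsinh : sinh v <= v * exp v).
  { unfold sinh; pose proof (exp_ineq1_le (- (2 * v))); pose proof (exp_pos v).
    replace (exp (- v)) with (exp v * exp (- (2 * v))) by (rewrite <- exp_plus; f_equal; ring).
    nra. }
  assert (exp v <= exp c)
    by (destruct (Req_dec v c) as [->|]; [lra|left; apply exp_increasing; lra]).
  replace c with (N * v) at 1 by (unfold v; field; lra).
  rewrite Rmult_assoc; apply Rmult_le_compat_l; nra.
Qed.

Lemma sin_ge_third w : 0 <= w <= 2 -> w / 3 <= sin w.
Proof.
  intros Hw; pose proof PI2_1.
  destruct (sin_bound w 0) as [Hsin _]; [lra|lra|].
  unfold sin_approx, sin_term in Hsin; simpl in Hsin; nra.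
Qed.

Lemma scaled_sin_ge N w : 1 <= N -> 0 <= w <= 2 * N -> w / 3 <= N * sin (w / N).
Proof.
  intros HN Hw.
  assert (0 <= w / N <= 2).
  { split; [apply Rdiv_le_0_compat; lra|].
    apply Rmult_le_reg_r with N; [lra|]; unfold Rdiv; rewrite Rmult_assoc, Rinv_l; lra. }
  pose proof (sin_ge_third (w / N) H).
  replace (w / 3) with (N * (w / N / 3)) by (field; lra).
  apply Rmult_le_compat_l; lra.
Qed.

Lemma coth_term_nonneg y M x : 0 < y -> 0 <= coth_term y M x.
Proof.
  intros hy; unfold coth_term; pose proof (nterms_ge1 M) as HN.
  assert (0 < sinh (2 * y / nterms M)) by (apply sinh_pos, Rdiv_lt_0_compat; lra).
  assert (0 < sinh (y / nterms M)) by (apply sinh_pos, Rdiv_lt_0_compat; lra).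
  assert (0 < (nterms M * sinh (y / nterms M)) ^ 2) by (apply pow_lt; nra).
  pose proof (pow2_ge_0 (nterms M * sin (PI * x / nterms M))).
  apply Rdiv_le_0_compat; nra.
Qed.

Lemma coth_term_le y M k : 0 < y -> (1 <= k <= M)%nat ->
  coth_term y M (INR k) <= 9 * y * exp (2 * y) / PI ^ 2 / INR k ^ 2.
Proof.
  intros hy Hk; unfold coth_term.
  pose proof (nterms_ge1 M) as HN; pose proof PI_RGT_0; pose proof PI_4.
  assert (Hk1 : 1 <= INR k) by (apply (le_INR 1); lia).
  assert (HkM : INR k <= INR M) by (apply le_INR; lia).
  assert (Hnum : nterms M * sinh (2 * y / nterms M) <= 2 * y * exp (2 * y))
    by (apply scaled_sinh_le; lra).
  assert (Hnum0 : 0 <= nterms M * sinh (2 * y / nterms M))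
    by (pose proof (sinh_pos (2 * y / nterms M) ltac:(apply Rdiv_lt_0_compat; lra)); nra).
  assert (Hsin : PI * INR k / 3 <= nterms M * sin (PI * INR k / nterms M))
    by (apply scaled_sin_ge; [lra|rewrite nterms_eq; split; nra]).
  assert (Hk0 : 0 < PI * INR k / 3) by (apply Rdiv_lt_0_compat; nra).
  assert (Hden : 2 * (PI * INR k / 3) ^ 2
                 <= 2 * ((nterms M * sinh (y / nterms M)) ^ 2
                         + (nterms M * sin (PI * INR k / nterms M)) ^ 2)).
  { pose proof (pow2_ge_0 (nterms M * sinh (y / nterms M))).
    assert ((PI * INR k / 3) ^ 2 <= (nterms M * sin (PI * INR k / nterms M)) ^ 2)
      by (apply pow_incr; lra).
    lra. }
  assert (0 < (PI * INR k / 3) ^ 2) by (apply pow_lt; lra).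
  apply Rle_trans with (2 * y * exp (2 * y) / (2 * (PI * INR k / 3) ^ 2)).
  - unfold Rdiv; apply Rmult_le_compat; try lra.
    + left; apply Rinv_0_lt_compat; lra.
    + apply Rinv_le_contravar; lra.
  - right; field; lra.
Qed.

Lemma fsum_inv_sq_tail K d : (1 <= K)%nat ->
  fsum (fun i => / INR (S (K + i)) ^ 2) d <= / INR K - / INR (K + d).
Proof.
  intros HK; induction d as [|d IH]; [simpl; rewrite Nat.add_0_r; lra|].
  change (fsum ?f (S d)) with (fsum f d + f d); cbv beta.
  assert (Hn : 1 <= INR (K + d)) by (apply (le_INR 1); lia).
  rewrite Nat.add_succ_r, S_INR.
  assert (/ (INR (K + d) + 1) ^ 2 <= / INR (K + d) - / (INR (K + d) + 1)).
  { replace (/ INR (K + d) - / (INR (K + d) + 1)) with (/ (INR (K + d) * (INR (K + d) + 1)))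
      by (field; lra).
    apply Rinv_le_contravar; nra. }
  lra.
Qed.

Lemma ex_series_inv_sq : ex_series (fun k => / INR (S k) ^ 2).
Proof.
  assert (Hpos : forall k, 0 < / INR (S k) ^ 2)
    by (intros; apply Rinv_0_lt_compat, pow_lt, lt_0_INR; lia).
  assert (Hgrow : Un_growing (fsum (fun k => / INR (S k) ^ 2))).
  { intros n; change (fsum ?f (S n)) with (fsum f n + f n); specialize (Hpos n); lra. }
  assert (Hbound : has_ub (fsum (fun k => / INR (S k) ^ 2))).
  { exists 2; intros x [n ->].
    destruct n as [|n]; [simpl; lra|].
    rewrite (fsum_split _ 1); change (fsum ?f 1) with (0 + f O); cbv beta.
    pose proof (fsum_inv_sq_tail 1 n ltac:(lia)) as Htail.
    assert (0 < / INR (1 + n)) by (apply Rinv_0_lt_compat, lt_0_INR; lia).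
    simpl INR in *; rewrite Rinv_1 in Htail; lra. }
  destruct (growing_cv _ Hgrow Hbound) as [l Hl].
  exists l; apply is_series_fsum, is_lim_seq_Reals, Hl.
Qed.

Lemma ex_series_dominated a K :
  (forall k, Rabs (a k) <= K / INR (S k) ^ 2) -> ex_series (fun k => Rabs (a k)).
Proof.
  intros Ha.
  apply (@ex_series_le R_AbsRing R_CompleteNormedModule)
    with (2 := ex_series_scal_l K _ ex_series_inv_sq).
  intros k; unfold norm; simpl; unfold abs; simpl; rewrite Rabs_Rabsolu; apply Ha.
Qed.

Lemma fsum_tail_dominated a C K d : (1 <= K)%nat -> 0 <= C ->
  (forall i, (i < d)%nat -> Rabs (a (K + i)%nat) <= C / INR (S (K + i)) ^ 2) ->
  Rabs (fsum (fun i => a (K + i)%nat) d) <= C / INR K.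
Proof.
  intros HK HC Ha.
  eapply Rle_trans; [apply fsum_abs|].
  eapply Rle_trans; [apply (fsum_le _ (fun i => C * / INR (S (K + i)) ^ 2)), Ha|].
  rewrite fsum_scal; apply Rmult_le_compat_l; [exact HC|].
  pose proof (fsum_inv_sq_tail K d HK).
  assert (0 < / INR (K + d)) by (apply Rinv_0_lt_compat, lt_0_INR; lia).
  lra.
Qed.

Lemma tannery (u : nat -> nat -> R) (v : nat -> R) C :
  (forall M k, (k < M)%nat -> Rabs (u M k) <= C / INR (S k) ^ 2) ->
  (forall k, is_lim_seq (fun M => u M k) (v k)) ->
  ex_series v /\ is_lim_seq (fun M => fsum (u M) M) (Series v).
Proof.
  intros Hu Huv.
  assert (Hv : forall k, Rabs (v k) <= C / INR (S k) ^ 2).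
  { intros k.
    assert (Hle : Rbar_le (Rabs (v k)) (C / INR (S k) ^ 2)).
    { apply (is_lim_seq_le_loc (fun M => Rabs (u M k)) (fun _ => C / INR (S k) ^ 2)).
      - exists (S k); intros M HM; apply Hu; lia.
      - apply (is_lim_seq_abs _ (v k)), Huv.
      - apply is_lim_seq_const. }
    exact Hle. }
  assert (HC : 0 <= C).
  { pose proof (Hv O); pose proof (Rabs_pos (v O)).
    assert (C / INR 1 ^ 2 = C) by (simpl; field); lra. }
  assert (Hex : ex_series v) by exact (ex_series_Rabs _ (ex_series_dominated v C Hv)).
  split; [exact Hex|].
  pose proof (Series_correct v Hex) as Hser; apply is_series_fsum, is_lim_seq_Reals in Hser.
  apply is_lim_seq_Reals; intros eps Heps.
  (* Split at K: the tail is uniformly below eps/3, and the first K terms converge. *)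
  destruct (Hser (eps / 3) ltac:(lra)) as [K0 HK0].
  destruct (INR_unbounded (3 * C / eps)) as [K1 HK1].
  set (K := Nat.max (Nat.max K0 K1) 1).
  assert (HK : (1 <= K)%nat) by (unfold K; lia).
  assert (Htail_small : C / INR K < eps / 3).
  { assert (INR K1 <= INR K) by (apply le_INR; unfold K; lia).
    assert (0 < INR K) by (apply lt_0_INR; lia).
    apply Rmult_lt_reg_r with (INR K); [lra|].
    unfold Rdiv; rewrite Rmult_assoc, Rinv_l, Rmult_1_r by lra.
    assert (3 * C / eps * eps = 3 * C) by (field; lra).
    nra. }
  pose proof (is_lim_seq_fsum u v K Huv) as Hhead; apply is_lim_seq_Reals in Hhead.
  destruct (Hhead (eps / 3) ltac:(lra)) as [M0 HM0].
  exists (Nat.max M0 K); intros M HM; unfold Rdist in *.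
  specialize (HM0 M ltac:(lia)); specialize (HK0 K ltac:(unfold K; lia)).
  pose proof (fsum_tail_dominated (u M) C K (M - K) HK HC
                (fun i Hi => Hu M (K + i)%nat ltac:(lia))) as Htail.
  replace (fsum (u M) M) with (fsum (u M) K + fsum (fun i => u M (K + i)%nat) (M - K))
    by (rewrite <- fsum_split; f_equal; lia).
  set (tail := fsum (fun i => u M (K + i)%nat) (M - K)) in *.
  replace (fsum (u M) K + tail - Series v)
    with ((fsum (u M) K - fsum v K) + tail + (fsum v K - Series v)) by ring.
  pose proof (Rabs_triang (fsum (u M) K - fsum v K + tail) (fsum v K - Series v)).
  pose proof (Rabs_triang (fsum (u M) K - fsum v K) tail).
  lra.
Qed.

Lemma is_lim_sum_sym_lorentz y : 0 < y ->
  is_lim_seq (fun M => sum_sym M (lorentz y)) (coth y / y).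
Proof.
  intros hy.
  set (C := 9 * y * exp (2 * y) / PI ^ 2).
  set (v k := 2 * (y * lorentz y (INR (S k)))).
  destruct (tannery (fun M k => 2 * coth_term y M (INR (S k))) v (2 * C)) as [Hv Hlim].
  - intros M k Hk.
    pose proof (coth_term_nonneg y M (INR (S k)) hy).
    pose proof (coth_term_le y M (S k) hy ltac:(lia)).
    rewrite Rabs_right by lra; unfold C, Rdiv in *; lra.
  - intros k; apply (is_lim_seq_scal_l _ 2 (Finite _)), coth_term_lim, hy.
  - assert (Hcoth : is_lim_seq (fun _ => coth y) (y * lorentz y 0 + Series v)).
    { apply (is_lim_seq_ext (fun M => coth_term y M 0
                                      + fsum (fun k => 2 * coth_term y M (INR (S k))) M)).
      - intros M; rewrite (coth_eq_sum_sym y M hy), sum_sym_even; [reflexivity|].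
        intros x; unfold coth_term.
        replace (PI * - x / nterms M) with (- (PI * x / nterms M))
          by (pose proof (nterms_ge1 M); field; lra).
        rewrite sin_neg; do 3 f_equal; ring.
      - apply is_lim_seq_plus'; [apply coth_term_lim, hy | exact Hlim]. }
    apply is_lim_seq_unique in Hcoth; rewrite Lim_seq_const in Hcoth.
    injection Hcoth as Hcoth.
    apply (is_lim_seq_ext (fun M => / y * (y * lorentz y 0 + fsum v M))).
    + intros M; rewrite sum_sym_even by apply lorentz_even.
      unfold v; rewrite !fsum_scal; field; lra.
    + replace (coth y / y) with (/ y * (y * lorentz y 0 + Series v)) by (rewrite Hcoth; field; lra).
      apply (is_lim_seq_scal_l _ (/ y) (Finite _)), is_lim_seq_plus';
        [apply is_lim_seq_const | apply is_series_fsum, Series_correct, Hv].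
Qed.

(** * Shifting symmetric sums *)

Definition inv_decay (g : R -> R) : Prop := forall z, 1 <= Rabs z -> Rabs (g z) <= / Rabs z.

Lemma is_lim_seq_inv_decay g (z : nat -> R) c : inv_decay g ->
  (forall M, INR M - c <= Rabs (z M)) -> is_lim_seq (fun M => g (z M)) 0.
Proof.
  intros Hg Hz; apply is_lim_seq_Reals; intros eps Heps.
  destruct (INR_unbounded (Rabs c + 1 + / eps)) as [M0 HM0].
  exists M0; intros M HM; unfold Rdist; rewrite Rminus_0_r.
  assert (INR M0 <= INR M) by (apply le_INR; lia).
  specialize (Hz M); pose proof (Rle_abs c).
  assert (0 < / eps) by (apply Rinv_0_lt_compat; lra).
  eapply Rle_lt_trans; [apply Hg; lra|].
  rewrite <- (Rinv_inv eps); apply Rinv_lt_contravar; nra.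
Qed.

Lemma sum_sym_shift_succ M h :
  sum_sym M (fun x => h (x + 1)) = sum_sym M h + h (INR M + 1) - h (- INR M).
Proof.
  unfold sum_sym.
  set (up k := h (INR k + 1)); set (down k := - h (- INR k)).
  rewrite (fsum_ext (fun k => h (INR (S k) + 1) + h (- INR (S k) + 1))
                    (fun k => (h (INR (S k)) + h (- INR (S k)))
                               + ((up (S k) - up k) + (down (S k) - down k)))).
  - rewrite !fsum_plus, !fsum_telescope; unfold up, down; simpl INR.
    rewrite Ropp_0, Rplus_0_l; ring.
  - intros k _; unfold up, down; rewrite !S_INR.
    replace (- (INR k + 1) + 1) with (- INR k) by ring; ring.
Qed.

Lemma sum_sym_shift_nat M g q :
  sum_sym M (fun x => g (INR q + x))
  = sum_sym M g + fsum (fun j => g (INR M + INR (S j)) - g (INR j - INR M)) q.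
Proof.
  induction q as [|q IH].
  - simpl INR; rewrite (sum_sym_ext M _ g) by (intros; rewrite Rplus_0_l; reflexivity).
    simpl; ring.
  - rewrite (sum_sym_ext M _ (fun x => g (INR q + (x + 1))))
      by (intros; rewrite S_INR; f_equal; ring).
    rewrite (sum_sym_shift_succ M (fun x => g (INR q + x))), IH.
    change (fsum ?f (S q)) with (fsum f q + f q); cbv beta.
    rewrite S_INR; replace (INR q + (INR M + 1)) with (INR M + (INR q + 1)) by ring.
    replace (INR q + - INR M) with (INR q - INR M) by ring; ring.
Qed.

Lemma is_lim_sum_sym_shift_nat g q (G : R) : inv_decay g ->
  is_lim_seq (fun M => sum_sym M g) G ->
  is_lim_seq (fun M => sum_sym M (fun x => g (INR q + x))) G.
Proof.
  intros Hg HG.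
  apply (is_lim_seq_ext (fun M => sum_sym M g
            + fsum (fun j => g (INR M + INR (S j)) - g (INR j - INR M)) q)).
  { intros M; symmetry; apply sum_sym_shift_nat. }
  replace G with (G + fsum (fun _ => 0 - 0) q)
    by (rewrite fsum_eq0 by (intros; ring); apply Rplus_0_r).
  apply is_lim_seq_plus'; [exact HG|].
  apply (is_lim_seq_fsum (fun M j => g (INR M + INR (S j)) - g (INR j - INR M))).
  intros j; apply is_lim_seq_minus'.
  - apply (is_lim_seq_inv_decay g _ 0 Hg); intros M.
    pose proof (pos_INR M); pose proof (pos_INR (S j)).
    rewrite Rabs_right; lra.
  - apply (is_lim_seq_inv_decay g _ (INR j) Hg); intros M.
    rewrite Rabs_minus_sym; apply Rle_abs.
Qed.

Lemma inv_decay_reflect g : inv_decay g -> inv_decay (fun x => g (- x)).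
Proof. intros Hg z Hz; rewrite <- (Rabs_Ropp z); apply Hg; rewrite Rabs_Ropp; exact Hz. Qed.

Lemma is_lim_sum_sym_shift g (q : Z) (G : R) : inv_decay g ->
  is_lim_seq (fun M => sum_sym M g) G ->
  is_lim_seq (fun M => sum_sym M (fun x => g (IZR q + x))) G.
Proof.
  intros Hg HG.
  destruct (Z_le_gt_dec 0 q) as [Hq|Hq].
  - rewrite <- (Z2Nat.id q Hq), <- INR_IZR_INZ.
    apply is_lim_sum_sym_shift_nat; assumption.
  - assert (Hq' : IZR q = - INR (Z.to_nat (- q)))
      by (rewrite INR_IZR_INZ, Z2Nat.id, opp_IZR by lia; ring).
    apply (is_lim_seq_ext (fun M => sum_sym M (fun x => g (- (INR (Z.to_nat (- q)) + x))))).
    + intros M; rewrite <- sum_sym_reflect; apply sum_sym_ext; intros x.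
      rewrite Hq'; f_equal; ring.
    + apply (is_lim_sum_sym_shift_nat (fun x => g (- x))); [apply inv_decay_reflect, Hg|].
      apply (is_lim_seq_ext (fun M => sum_sym M g)); [|exact HG].
      intros M; symmetry; apply sum_sym_reflect.
Qed.

(** * The discrete Hilbert transform *)

Lemma mul_lorentz_inv_decay y : 0 < y -> inv_decay (fun x => x * lorentz y x).
Proof.
  intros hy z Hz; unfold lorentz.
  pose proof (lorentz_denom_pos y z hy) as HD; pose proof PI2_1.
  rewrite <- (pow2_abs z) in *; set (a := Rabs z) in *.
  rewrite Rabs_mult, (Rabs_right (/ _)) by (apply Rle_ge, Rlt_le, Rinv_0_lt_compat; exact HD).
  fold a; set (D := y ^ 2 + PI ^ 2 * a ^ 2) in *.
  assert (1 <= PI ^ 2) by nra.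
  pose proof (pow2_ge_0 a); pose proof (pow2_ge_0 y).
  assert (Ha2 : a ^ 2 <= D) by (unfold D; nra).
  pose proof (Rinv_r D ltac:(lra)); pose proof (Rinv_0_lt_compat D HD).
  pose proof (Rinv_r a ltac:(lra)); pose proof (Rinv_0_lt_compat a ltac:(lra)).
  assert (a ^ 2 * / D <= 1) by nra.
  nra.
Qed.

Lemma lorentz_inv_decay y : 0 < y -> inv_decay (lorentz y).
Proof.
  intros hy z Hz.
  eapply Rle_trans; [|apply (mul_lorentz_inv_decay y hy z Hz)].
  rewrite Rabs_mult, (Rabs_right (lorentz y z))
    by (apply Rle_ge, Rlt_le, Rinv_0_lt_compat, lorentz_denom_pos, hy).
  pose proof (Rinv_0_lt_compat _ (lorentz_denom_pos y z hy)); unfold lorentz; nra.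
Qed.

Lemma lorentz_div_bound y p m : 0 < y -> 1 <= Rabs m ->
  Rabs (lorentz y (p - m) / m) <= (2 / PI ^ 2 + 2 * p ^ 2 / y ^ 2) / m ^ 2.
Proof.
  intros hy Hm; unfold lorentz; pose proof PI2_1.
  pose proof (lorentz_denom_pos y (p - m) hy) as HD.
  set (K := 2 / PI ^ 2 + 2 * p ^ 2 / y ^ 2).
  set (D := y ^ 2 + PI ^ 2 * (p - m) ^ 2) in *.
  assert (HK : 0 < K).
  { unfold K; pose proof (pow2_ge_0 p).
    assert (0 < 2 / PI ^ 2) by (apply Rdiv_lt_0_compat; [lra|apply pow_lt; lra]).
    assert (0 <= 2 * p ^ 2 / y ^ 2) by (apply Rdiv_le_0_compat; [lra|apply pow_lt; lra]).
    lra. }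
  assert (HKD : m ^ 2 <= K * D).
  { replace (K * D) with (2 * y ^ 2 / PI ^ 2 + 2 * (p - m) ^ 2 + 2 * p ^ 2
                          + 2 * p ^ 2 * PI ^ 2 * (p - m) ^ 2 / y ^ 2)
      by (unfold K, D; field; split; lra).
    assert (0 <= 2 * y ^ 2 / PI ^ 2) by (apply Rdiv_le_0_compat; [nra|apply pow_lt; lra]).
    assert (0 <= 2 * p ^ 2 * PI ^ 2 * (p - m) ^ 2 / y ^ 2).
    { apply Rdiv_le_0_compat; [|apply pow_lt; lra].
      pose proof (pow2_ge_0 p); pose proof (pow2_ge_0 (p - m)); pose proof (pow2_ge_0 PI).
      apply Rmult_le_pos; [apply Rmult_le_pos|]; nra. }
    pose proof (pow2_ge_0 (2 * p - m)); nra. }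
  rewrite <- (pow2_abs m) in HKD |- *.
  unfold Rdiv; rewrite Rabs_mult, (Rabs_right (/ D)), Rabs_inv
    by (apply Rle_ge, Rlt_le, Rinv_0_lt_compat; exact HD).
  set (a := Rabs m) in *.
  pose proof (Rinv_r D ltac:(lra)); pose proof (Rinv_0_lt_compat D HD).
  pose proof (Rinv_r a ltac:(lra)); pose proof (Rinv_0_lt_compat a ltac:(lra)).
  pose proof (Rinv_r (a ^ 2) ltac:(nra)); pose proof (Rinv_0_lt_compat (a ^ 2) ltac:(nra)).
  assert (/ D <= K * / a ^ 2) by nra.
  assert (/ a <= 1) by nra.
  nra.
Qed.

Lemma lorentz_div_partial_fraction y p m : 0 < y -> m <> 0 ->
  lorentz y (p - m) / m
  = lorentz y p / m + PI ^ 2 * lorentz y p * ((p + (p - m)) * lorentz y (p - m)).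
Proof.
  intros hy Hm; unfold lorentz.
  pose proof (lorentz_denom_pos y p hy); pose proof (lorentz_denom_pos y (p - m) hy).
  field; repeat split; lra.
Qed.

Lemma calA_lorentz y m : calA y m = lorentz y (IZR m).
Proof. reflexivity. Qed.

Lemma is_sum_Zstar_sum_sym (f : Z -> R) (h : R -> R) K (H : R) :
  (forall m, m <> 0%Z -> Rabs (f m) <= K / IZR m ^ 2) ->
  (forall k, f (Z.of_nat (S k)) + f (- Z.of_nat (S k))%Z = h (INR (S k)) + h (- INR (S k))) ->
  is_lim_seq (fun M => sum_sym M h) H ->
  is_sum_Zstar f (H - h 0).
Proof.
  intros Hf Hpair Hh.
  assert (Hpos : ex_series (fun k => Rabs (f (Z.of_nat (S k))))).
  { apply (ex_series_dominated _ K); intros k.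
    rewrite INR_IZR_INZ; apply Hf; lia. }
  assert (Hneg : ex_series (fun k => Rabs (f (- Z.of_nat (S k))%Z))).
  { apply (ex_series_dominated _ K); intros k.
    replace (INR (S k) ^ 2) with (IZR (- Z.of_nat (S k)) ^ 2)
      by (rewrite opp_IZR, <- INR_IZR_INZ; ring).
    apply Hf; lia. }
  split; [exact Hpos | split; [exact Hneg|]].
  rewrite <- Series_plus by (apply ex_series_Rabs; assumption).
  symmetry; apply is_series_unique, is_series_fsum.
  apply (is_lim_seq_ext (fun M => sum_sym M h - h 0)).
  - intros M; unfold sum_sym; rewrite (fsum_ext _ _ M (fun k _ => Hpair k)); ring.
  - apply is_lim_seq_minus'; [exact Hh | apply is_lim_seq_const].
Qed.

Lemma is_lim_sum_sym_shift_lorentz y (q : Z) : 0 < y ->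
  is_lim_seq (fun M => sum_sym M (fun x => (IZR q + (IZR q + x)) * lorentz y (IZR q + x)))
    (IZR q * (coth y / y)).
Proof.
  intros hy.
  apply (is_lim_seq_ext (fun M => IZR q * sum_sym M (fun x => lorentz y (IZR q + x))
                                  + sum_sym M (fun x => (IZR q + x) * lorentz y (IZR q + x)))).
  { intros M; rewrite <- sum_sym_scal, <- sum_sym_plus; apply sum_sym_ext; intros; ring. }
  rewrite <- (Rplus_0_r (IZR q * (coth y / y))).
  apply is_lim_seq_plus'.
  - apply (is_lim_seq_scal_l _ _ (Finite _)), (is_lim_sum_sym_shift (lorentz y) q).
    + apply lorentz_inv_decay, hy.
    + apply is_lim_sum_sym_lorentz, hy.
  - apply (is_lim_sum_sym_shift (fun x => x * lorentz y x) q).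
    + apply mul_lorentz_inv_decay, hy.
    + apply (is_lim_seq_ext (fun _ => 0)); [|apply is_lim_seq_const].
      intros M; symmetry; apply sum_sym_odd; intros x; rewrite lorentz_even; ring.
Qed.

Theorem lemma3p13 (y : R) (hy : 0 < y) (n : Z) :
  is_discrete_hilbert (calA y) n (calB y n).
Proof.
  set (p := IZR n).
  set (h x := PI ^ 2 * lorentz y p * ((p + (p + x)) * lorentz y (p + x))).
  assert (Hh : is_lim_seq (fun M => sum_sym M h) (PI ^ 2 * lorentz y p * (p * (coth y / y)))).
  { apply (is_lim_seq_ext (fun M => PI ^ 2 * lorentz y p
                                    * sum_sym M (fun x => (p + (p + x)) * lorentz y (p + x)))).
    - intros M; symmetry; apply sum_sym_scal.
    - apply (is_lim_seq_scal_l _ _ (Finite _)), is_lim_sum_sym_shift_lorentz, hy. }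
  exists (PI ^ 2 * lorentz y p * (p * (coth y / y)) - h 0); split.
  - apply (is_sum_Zstar_sum_sym _ h (2 / PI ^ 2 + 2 * p ^ 2 / y ^ 2)); [| |exact Hh].
    + intros m Hm; rewrite calA_lorentz, minus_IZR; apply lorentz_div_bound; [exact hy|].
      rewrite Rabs_Zabs; apply IZR_le; lia.
    + intros k; pose proof (not_0_INR (S k) ltac:(lia)).
      rewrite !calA_lorentz, !minus_IZR, opp_IZR, <- INR_IZR_INZ; fold p.
      rewrite !lorentz_div_partial_fraction by (assumption || lra).
      unfold h; replace (p - - INR (S k)) with (p + INR (S k)) by ring.
      replace (p + - INR (S k)) with (p - INR (S k)) by ring.
      field; assumption.
  - unfold calB, h, lorentz; fold p; rewrite Rplus_0_r.
    pose proof (lorentz_denom_pos y p hy); pose proof PI_RGT_0.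
    field; repeat split; lra.
Qed.
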